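(* Let $G$ be a small category and $X$ a set with a partial category action by $G$; let $Y$ with its global action by $G$ be as defined below, and let $i : X\to Y$ be given by $i(x) = [e,x]$ where $e\in{\rm ob}(G)$ is any object with $e\cdot x$ defined. Then $i$ is injective, and for all $y,z\in X$ and $g\in{\rm mor}(G)$: $g\cdot y$ is defined and equal to $z$ if and only if $g\cdot i(y)$ is defined and equal to $i(z)$.
   Context: Conventions: $G$ is a small category; objects are identified with their identity morphisms, so ${\rm ob}(G)\subseteq{\rm mor}(G)$; $d(g), c(g)$ are domain and codomain, $G^2=\{(g,h)\mid d(g)=c(h)\}$. A partial category action by $G$ on $X$ is a partial function ${\rm mor}(G)\times X\to X$, $(g,x)\mapsto g\cdot x$ where defined, such that: (C1) for every $x$ there is $e\in{\rm ob}(G)$ with $e\cdot x$ defined, and whenever $f\in{\rm ob}(G)$ and $f\cdot x$ is defined, $f\cdot x=x$; (C2) if $g\cdot x$ is defined then $d(g)\cdot x$ is defined; (C3) if $(g,h)\in G^2$ and $h\cdot x$ is defined, then $(gh)\cdot x$ is defined iff $g\cdot(h\cdot x)$ is defined, and then they are equal. Let $\overline{X} = \{(g,x)\in{\rm mor}(G)\times X\mid d(g)\cdot x\text{ defined}\}$. Define $(g,x)\sim(g',x')$ on $\overline{X}$ if either (i) there is $h\in{\rm mor}(G)$ with $(g',h)\in G^2$, $h\cdot x$ defined, $g=g'h$ and $x'=h\cdot x$; or (ii) $x=x'$, $g,g'\in{\rm ob}(G)$ and both $g\cdot x$ and $g'\cdot x'$ are defined. Let $\simeq$ be the equivalence relation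 generated by $\sim$, $Y = \overline{X}/\simeq$, and $[g,x]$ the class of $(g,x)$. The action on $Y$: $g\cdot[h,x]$ is defined iff there is $(h',x')\in\overline{X}$ with $(h,x)\simeq(h',x')$ and $(g,h')\in G^2$, and then $g\cdot[h,x]=[gh',x']$. (The map $i$ is well defined, i.e. independent of the choice of $e$.) *)

From Stdlib Require Import Relations.

(* A small category, with objects identified with identity morphisms:
   mor is the type of morphisms, isObj singles out the objects. *)
Record SmallCat := {
  mor :> Type;
  isObj : mor -> Prop;
  dom : mor -> mor;
  cod : mor -> mor;
  comp : mor -> mor -> mor;   (* meaningful only on composable pairs *)
  dom_obj : forall g, isObj (dom g);
  cod_obj : forall g, isObj (cod g);
  obj_dom : forall e, isObj e -> dom e = e;
  obj_cod : forall e, isObj e -> cod e = e;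
  comp_dom : forall g h, dom g = cod h -> dom (comp g h) = dom h;
  comp_cod : forall g h, dom g = cod h -> cod (comp g h) = cod g;
  comp_assoc : forall f g h, dom f = cod g -> dom g = cod h ->
      comp f (comp g h) = comp (comp f g) h;
  comp_id_r : forall g, comp g (dom g) = g;
  comp_id_l : forall g, comp (cod g) g = g
}.

Arguments isObj {s} _.
Arguments dom {s} _.
Arguments cod {s} _.
Arguments comp {s} _ _.

Definition composable {G : SmallCat} (g h : G) : Prop := dom g = cod h.

Definition defined {A : Type} (o : option A) : Prop := o <> None.

(* Partial category action: act g x = Some y means g.x is defined and equals y. *)
Record PartialAction (G : SmallCat) (X : Type) := {
  act : G -> X -> option X;
  C1_exists : forall x, exists e, isObj e /\ defined (act e x);
  C1_fix : forall f x, isObj f -> defined (act f x) -> act f x = Some x;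
  C2 : forall g x, defined (act g x) -> defined (act (dom g) x);
  C3 : forall g h x y, composable g h -> act h x = Some y ->
      act (comp g h) x = act g y   (* defined iff defined, and then equal *)
}.

Arguments act {G X} _ _ _.

Section Globalization.
Context {G : SmallCat} {X : Type} (A : PartialAction G X).

Definition Xbar (p : G * X) : Prop := defined (act A (dom (fst p)) (snd p)).

Definition sim (p q : G * X) : Prop :=
  Xbar p /\ Xbar q /\
  ( (exists h, composable (fst q) h /\ defined (act A h (snd p)) /\
        fst p = comp (fst q) h /\ act A h (snd p) = Some (snd q))
    \/ (snd p = snd q /\ isObj (fst p) /\ isObj (fst q) /\
        defined (act A (fst p) (snd p)) /\ defined (act A (fst q) (snd q)))).

Definition simeq : relation (G * X) := clos_refl_sym_trans _ sim.

(* Y = \overline{X}/simeq; an element of Y is represented by its class,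
   a predicate on G * X. *)
Definition cls (p : G * X) : G * X -> Prop := fun q => simeq p q.

Definition Y : Type := { P : G * X -> Prop | exists p, Xbar p /\ P = cls p }.

(* The global action on Y, as a relation:  Yact g P Q  means
   "g . P is defined and equals Q":  there is (h',x') simeq to a
   representative of P with (g,h') in G^2 and Q = [g h', x']. *)
Definition Yact (g : G) (P Q : G * X -> Prop) : Prop :=
  exists h' x', Xbar (h', x') /\ P (h', x') /\ composable g h' /\
    Q = cls (comp g h', x').

End Globalization.

(* The map (g, x) |-> g.x is constant on each ~-step (by C3 for steps of
   kind (i), by C1 for steps of kind (ii)), hence on each class of Y, and on
   the class i(x) it takes the value x.  This invariant gives injectivity of i
   and the backward implication.  Conversely, if g.y = z, the class i(y)
   contains (dom g, y) and the class i(z) contains (g, y), since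
   (g, y) ~ (cod g, z) and (cod g, z) ~ (e, z); so g.i(y) = [g dom g, y] = i(z). *)
From Stdlib Require Import Relations FunctionalExtensionality PropExtensionality.

Section Globalization.
Variables (G : SmallCat) (X : Type) (A : PartialAction G X).

Lemma act_sim p q : sim A p q -> act A (fst p) (snd p) = act A (fst q) (snd q).
Proof.
  destruct p as [g x], q as [g' x']; unfold sim; simpl.
  intros [_ [_ [[h [Hc [_ [-> Hh]]]] | [-> [Hg [Hg' [Hd Hd']]]]]]].
  - exact (C3 _ _ A g' h x x' Hc Hh).
  - now rewrite (C1_fix _ _ A g x' Hg Hd), (C1_fix _ _ A g' x' Hg' Hd').
Qed.

Lemma act_simeq p q : simeq A p q -> act A (fst p) (snd p) = act A (fst q) (snd q).
Proof.
  induction 1; [apply act_sim; assumption | reflexivity | congruence | congruence].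
Qed.

Lemma act_simeq_obj e x p :
  isObj e -> defined (act A e x) -> simeq A (e, x) p -> act A (fst p) (snd p) = Some x.
Proof.
  intros He Hd Hp. rewrite <- (act_simeq _ _ Hp). exact (C1_fix _ _ A e x He Hd).
Qed.

Lemma cls_simeq p q : simeq A p q -> cls A p = cls A q.
Proof.
  intro Hpq. apply functional_extensionality. intro r.
  apply propositional_extensionality. unfold cls. split; intro H.
  - exact (rst_trans _ _ _ _ _ (rst_sym _ _ _ _ Hpq) H).
  - exact (rst_trans _ _ _ _ _ Hpq H).
Qed.

Lemma simeq_of_cls_eq p q : cls A p = cls A q -> simeq A p q.
Proof. intro Hpq. change (cls A p q). rewrite Hpq. apply rst_refl. Qed.

Lemma Xbar_obj e x : isObj e -> defined (act A e x) -> Xbar A (e, x).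
Proof. intros He Hd. unfold Xbar; simpl. now rewrite (obj_dom _ e He). Qed.

Lemma sim_obj e f x : isObj e -> defined (act A e x) -> isObj f -> defined (act A f x) ->
  sim A (e, x) (f, x).
Proof.
  intros He Hde Hf Hdf. split; [apply Xbar_obj; assumption|].
  split; [apply Xbar_obj; assumption|]. right. simpl. tauto.
Qed.

Lemma act_dom_defined g y z : act A g y = Some z -> defined (act A (dom g) y).
Proof. intro Hg. apply (C2 _ _ A). rewrite Hg. discriminate. Qed.

Lemma act_cod g y z : act A g y = Some z -> act A (cod g) z = Some z.
Proof.
  intro Hg. rewrite <- (C3 _ _ A (cod g) g y z); [now rewrite comp_id_l | | exact Hg].
  unfold composable. now rewrite obj_dom by apply cod_obj.
Qed.

Lemma sim_act_cod g y z : act A g y = Some z -> sim A (g, y) (cod g, z).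
Proof.
  intro Hg. assert (Hz : defined (act A (cod g) z)) by (rewrite (act_cod _ _ _ Hg); discriminate).
  split; [exact (act_dom_defined _ _ _ Hg)|].
  split; [apply Xbar_obj; [apply cod_obj | exact Hz]|].
  left. exists g. simpl. repeat split.
  - unfold composable. now rewrite obj_dom by apply cod_obj.
  - rewrite Hg. discriminate.
  - now rewrite comp_id_l.
  - exact Hg.
Qed.

End Globalization.

Theorem mainTheorem9 (G : SmallCat) (X : Type) (A : PartialAction G X)
    (e : X -> G) (he : forall x, isObj (e x) /\ defined (act A (e x) x)) :
  let i := fun x : X => cls A (e x, x) in
  (forall y z : X, i y = i z -> y = z) /\
  (forall (y z : X) (g : G), act A g y = Some z <-> Yact A g (i y) (i z)).
Proof.
  intro i.
  assert (Hi : forall x p, simeq A (e x, x) p -> act A (fst p) (snd p) = Some x)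
    by (intros x p; destruct (he x); apply act_simeq_obj; assumption).
  split; [|split].
  - intros y z Hyz. apply simeq_of_cls_eq, Hi in Hyz.
    rewrite (Hi z (e z, z) (rst_refl _ _ _)) in Hyz. congruence.
  - intro Hg. destruct (he y) as [Hy Hdy], (he z) as [Hz Hdz].
    assert (Hdg := act_dom_defined _ _ _ _ _ _ Hg).
    exists (dom g), y. repeat split.
    + apply Xbar_obj; [apply dom_obj | exact Hdg].
    + apply rst_step, sim_obj; [exact Hy | exact Hdy | apply dom_obj | exact Hdg].
    + unfold composable. now rewrite obj_cod by apply dom_obj.
    + rewrite comp_id_r. apply cls_simeq, rst_sym.
      apply (rst_trans _ _ _ (cod g, z)); apply rst_step; [now apply sim_act_cod|].
      apply sim_obj; [apply cod_obj | | exact Hz | exact Hdz].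
      rewrite (act_cod _ _ _ _ _ _ Hg). discriminate.
  - intros [h' [x' [_ [Hy [Hc Hz]]]]].
    apply Hi in Hy. simpl in Hy. rewrite <- (C3 _ _ A g h' x' y Hc Hy).
    apply (Hi z (comp g h', x')), simeq_of_cls_eq. exact Hz.
Qed.
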